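(* Let $\nabla:\Omega(A)\to\Omega(A)\otimes_A\Omega(A)$ be a module connection with associated affine connection $(\mathsf K_\nabla,\mathsf H_\nabla)$ and torsion $\mathsf V$. Then $\mathsf V(a)=a$ and $\mathsf V(\mathsf d(a))=\widehat\psi(\widehat\nabla(\mathsf d(a)))$ for all $a\in A$. In particular, if $\widehat\nabla(\mathsf d(a))=0$ for all $a\in A$, then $(\mathsf K_\nabla,\mathsf H_\nabla)$ is torsion-free.
   Context: Fix a commutative ring $R$ and a commutative $R$-algebra $A$; $\Omega(A)$ is the Kähler module of $A$ over $R$ with universal derivation $\mathsf d$, and $\Omega^2(A)=\Omega(A)\wedge_A\Omega(A)$. A module connection on $\Omega(A)$ is an $R$-linear $\nabla:\Omega(A)\to\Omega(A)\otimes_A\Omega(A)$ with $\nabla(a\alpha)=a\nabla(\alpha)+\mathsf d(a)\otimes\alpha$. $\mathsf T(A)=\mathrm{Sym}_A(\Omega(A))$ (which equals the symmetric algebra $\mathsf S_A(\Omega(A))$), $\mathsf T^2(A)=\mathsf T(\mathsf T(A))$ with universal derivation $\mathsf d':\mathsf T(A)\to\mathsf T^2(A)$, generated over $A$ by $\mathsf d(a),\mathsf d'(a),\mathsf d'\mathsf d(a)$; $\mathsf c_A:\mathsf T^2(A)\to\mathsf T^2(A)$ is the algebra map $a\mapsto a$, $\mathsf d(a)\mapsto\mathsf d'(a)$, $\mathsf d'(a)\mapsto\mathsf d(a)$, $\mathsf d'\mathsf d(a)\mapsto\mathsf d'\mathsf d(a)$. The associated affine connection (a tangent category connection on the tangent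 bundle of $A$ in affine schemes) has vertical part the algebra map $\mathsf K_\nabla:\mathsf T(A)\to\mathsf T^2(A)$, $a\mapsto a$, $\mathsf d(a)\mapsto\mathsf d'\mathsf d(a)-U'(\nabla(\mathsf d a))$, and horizontal part $\mathsf H_\nabla:\mathsf T^2(A)\to\mathsf T(A)\otimes_A\mathsf T(A)$ with $\mathsf H_\nabla(\mathsf d'\mathsf d(a))=\nabla(\mathsf d(a))$, where $U':\mathsf T(A)\otimes_A\mathsf T(A)\to\mathsf T^2(A)$ is the algebra map $w\otimes v\mapsto\mathsf T(\mathsf p_A)(w)\,v$ with $\mathsf T(\mathsf p_A)(a)=a$, $\mathsf T(\mathsf p_A)(\mathsf d a)=\mathsf d'(a)$ (so $\mathsf d(b)\otimes\mathsf d(c)\mapsto\mathsf d'(b)\mathsf d(c)$). The torsion of this affine connection (computed from the horizontal connection) is the algebra map $\mathsf V:\mathsf T(A)\to\mathsf T^2(A)$ with $\mathsf V(a)=a$ and $\mathsf V(\mathsf d(a))=\mathsf c_A\big(U'(\mathsf H_\nabla(\mathsf d'\mathsf d a))\big)-U'\big(\mathsf H_\nabla(\mathsf c_A(\mathsf d'\mathsf d a))\big)$; the connection is torsion-free if $\mathsf V(\mathsf d(a))=0$ for all $a\in A$. The torsion of $\nabla$ is $\widehat\nabla=\omega\circ\nabla:\Omega(A)\to\Omega^2(A)$ with $\omega(\alpha\otimes\beta)=\alpha\wedge\beta$. The map $\widehat\psi:\Omega^2(A)\to\mathsf T^2(A)$ is $a\,\mathsf d(b)\wedge\mathsf d(c)\mapsto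 a\,\mathsf d(b)\mathsf d'(c)-a\,\mathsf d'(b)\mathsf d(c)$, extended additively. *)

(* Kähler modules, tensor products, exterior squares,
   symmetric algebras and tensor products of algebras are not in MathComp;
   they are given here by their universal properties. *)
From mathcomp Require Import all_boot all_algebra.
Set Implicit Arguments.
Unset Strict Implicit.
Unset Printing Implicit Defensive.
Import GRing.Theory.
Local Open Scope ring_scope.

Definition additive_fun (U V : zmodType) (f : U -> V) : Prop :=
  forall x y, f (x + y) = f x + f y.

Definition Alinear (A : pzRingType) (U V : lmodType A) (f : U -> V) : Prop :=
  additive_fun f /\ forall (a : A) x, f (a *: x) = a *: f x.

Definition ring_mor (S T : pzRingType) (f : S -> T) : Prop :=
  [/\ additive_fun f, (forall x y, f (x * y) = f x * f y) & f 1 = 1].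

Definition alg_mor (A : pzRingType) (S T : comAlgType A) (f : S -> T) : Prop :=
  ring_mor f /\ forall (a : A) x, f (a *: x) = a *: f x.

(* R-linear derivations S -> M, where R acts on S (and M) through sc : R -> S *)
Definition R_derivation (R : Type) (S : comPzRingType) (sc : R -> S)
    (M : lmodType S) (D : S -> M) : Prop :=
  [/\ additive_fun D, (forall r s, D (sc r * s) = sc r *: D s)
    & forall s t, D (s * t) = s *: D t + t *: D s].

Definition is_Kahler (R : Type) (S : comPzRingType) (sc : R -> S)
    (Om : lmodType S) (d : S -> Om) : Prop :=
  R_derivation sc d /\
  forall (M : lmodType S) (D : S -> M), R_derivation sc D ->
    exists f : Om -> M,
      [/\ Alinear f, (forall s, f (d s) = D s)
        & forall g : Om -> M, Alinear g -> (forall s, g (d s) = D s) ->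
            forall x, g x = f x].

Definition bilinear_map (A : pzRingType) (U V W : lmodType A)
    (b : U -> V -> W) : Prop :=
  (forall v, Alinear (fun u => b u v)) /\ (forall u, Alinear (b u)).

Definition is_tensor (A : pzRingType) (U V T : lmodType A)
    (t : U -> V -> T) : Prop :=
  bilinear_map t /\
  forall (M : lmodType A) (b : U -> V -> M), bilinear_map b ->
    exists f : T -> M,
      [/\ Alinear f, (forall u v, f (t u v) = b u v)
        & forall g : T -> M, Alinear g -> (forall u v, g (t u v) = b u v) ->
            forall x, g x = f x].

Definition is_wedge (A : pzRingType) (U W : lmodType A)
    (w : U -> U -> W) : Prop :=
  [/\ bilinear_map w, (forall u, w u u = 0) &
  forall (M : lmodType A) (b : U -> U -> M), bilinear_map b ->
    (forall u, b u u = 0) ->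
    exists f : W -> M,
      [/\ Alinear f, (forall u v, f (w u v) = b u v)
        & forall g : W -> M, Alinear g -> (forall u v, g (w u v) = b u v) ->
            forall x, g x = f x]].

Definition is_symalg (A : comNzRingType) (M : lmodType A) (S : comAlgType A)
    (j : M -> S) : Prop :=
  Alinear j /\
  forall (B : comAlgType A) (f : M -> B), Alinear f ->
    exists g : S -> B,
      [/\ alg_mor g, (forall m, g (j m) = f m)
        & forall h : S -> B, alg_mor h -> (forall m, h (j m) = f m) ->
            forall x, h x = g x].

(* (P, i1, i2) is the tensor product S1 (x)_A S2 of commutative A-algebras,
   with i1 w * i2 v playing the role of w (x) v *)
Definition is_alg_tensor (A : comNzRingType) (S1 S2 P : comAlgType A)
    (i1 : S1 -> P) (i2 : S2 -> P) : Prop :=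
  [/\ alg_mor i1, alg_mor i2 &
  forall (B : comAlgType A) (g1 : S1 -> B) (g2 : S2 -> B),
    alg_mor g1 -> alg_mor g2 ->
    exists h : P -> B,
      [/\ alg_mor h, (forall x, h (i1 x) = g1 x), (forall y, h (i2 y) = g2 y)
        & forall k : P -> B, alg_mor k -> (forall x, k (i1 x) = g1 x) ->
            (forall y, k (i2 y) = g2 y) -> forall z, k z = h z]].

Definition module_connection (R : Type) (A : comNzRingType) (sc : R -> A)
    (Om OO : lmodType A) (d : A -> Om) (tens : Om -> Om -> OO)
    (nab : Om -> OO) : Prop :=
  [/\ additive_fun nab, (forall r x, nab (sc r *: x) = sc r *: nab x)
    & forall (a : A) x, nab (a *: x) = a *: nab x + tens (d a) x].

(* Since c_A fixes d'd(a) and H_nabla(d'd(a)) = nabla(d(a)), the torsion at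
   d(a) is c_A(y) - y with y = U'(nabla(d(a))); neither the Leibniz rule of
   nabla nor K_nabla plays a role.  The map x |-> c_A(U' x) - U' x is additive,
   and on an elementary tensor a d(b) (x) d(e) it yields
   a d(b) d'(e) - a d'(b) d(e) = psi-hat(a d(b) /\ d(e)), because c_A swaps
   d and d'.  Finally, the uniqueness clauses of the universal properties of
   Omega(A) and of the tensor product force the elementary tensors to span
   Omega(A) (x)_A Omega(A), so the identity holds everywhere. *)
From HB Require Import structures.
From mathcomp Require Import all_boot all_algebra.
From Stdlib Require Import ClassicalEpsilon.

Set Implicit Arguments.
Unset Strict Implicit.
Unset Printing Implicit Defensive.

Import GRing.Theory.
Local Open Scope ring_scope.

Definition asbool (Q : Prop) : bool :=
  if excluded_middle_informative Q then true else false.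

Lemma asboolP (Q : Prop) : reflect Q (asbool Q).
Proof. by rewrite /asbool; case: excluded_middle_informative => q; constructor. Qed.

Lemma additive_fun0 (U V : zmodType) (f : U -> V) : additive_fun f -> f 0 = 0.
Proof. by move=> fD; apply: (@addrI _ (f 0)); rewrite -fD !addr0. Qed.

Lemma additive_fun_comp (U V W : zmodType) (f : V -> W) (g : U -> V) :
  additive_fun f -> additive_fun g -> additive_fun (f \o g).
Proof. by move=> fD gD x y /=; rewrite gD fD. Qed.

Lemma additive_funB (U V : zmodType) (f g : U -> V) :
  additive_fun f -> additive_fun g -> additive_fun (fun x => f x - g x).
Proof. by move=> fD gD x y; rewrite fD gD opprD addrACA. Qed.

Lemma Alinear_id (A : pzRingType) (U : lmodType A) : Alinear (@id U).
Proof. by []. Qed.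

Lemma Alinear_comp (A : pzRingType) (U V W : lmodType A) (f : V -> W)
    (g : U -> V) : Alinear f -> Alinear g -> Alinear (f \o g).
Proof. by move=> [fD fZ] [gD gZ]; split=> [x y|a x] /=; rewrite ?gD ?fD ?gZ ?fZ. Qed.

Inductive lin_span (A : pzRingType) (M : lmodType A) (G : M -> Prop) : M -> Prop :=
| lin_span0 : lin_span G 0
| lin_spanD x y : lin_span G x -> lin_span G y -> lin_span G (x + y)
| lin_span_gen a x : G x -> lin_span G (a *: x).

Lemma lin_spanZ (A : pzRingType) (M : lmodType A) (G : M -> Prop) a x :
  lin_span G x -> lin_span G (a *: x).
Proof.
elim=> [|y z _ IHy _ IHz|b y Gy].
- by rewrite scaler0; apply: lin_span0.
- by rewrite scalerDr; apply: lin_spanD.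
- by rewrite scalerA; apply: lin_span_gen.
Qed.

Lemma lin_span_ext (A : pzRingType) (M : lmodType A) (G : M -> Prop)
    (V : zmodType) (f g : M -> V) :
  additive_fun f -> additive_fun g ->
  (forall a x, G x -> f (a *: x) = g (a *: x)) ->
  forall x, lin_span G x -> f x = g x.
Proof.
move=> fD gD fg x; elim=> [|y z _ IHy _ IHz|]; last exact: fg.
- by rewrite !additive_fun0.
- by rewrite fD gD IHy IHz.
Qed.

Section SpanSubmodule.
Variables (A : pzRingType) (M : lmodType A) (G : M -> Prop).

(* Subtypes of MathComp need a boolean membership predicate, hence [asbool]. *)
Definition in_lin_span (x : M) : bool := asbool (lin_span G x).

Lemma in_lin_span_subsemimod_closed : subsemimod_closed in_lin_span.
Proof.
split; first split.
- exact/asboolP/lin_span0.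
- by move=> x y /asboolP Gx /asboolP Gy; apply/asboolP/lin_spanD.
- by move=> a x /asboolP Gx; apply/asboolP/lin_spanZ.
Qed.

HB.instance Definition _ := GRing.isSubmodClosed.Build A M in_lin_span
  in_lin_span_subsemimod_closed.

Inductive span_submod : Type := SpanSubmod x of in_lin_span x.
Definition span_submod_val (u : span_submod) : M :=
  let: SpanSubmod x _ := u in x.
HB.instance Definition _ := [isSub for span_submod_val].
HB.instance Definition _ := [Choice of span_submod by <:].
HB.instance Definition _ := [SubChoice_isSubZmodule of span_submod by <:].
HB.instance Definition _ := [SubZmodule_isSubLmodule of span_submod by <:].

Definition span_submod_of {x} (Gx : lin_span G x) : span_submod :=
  @SpanSubmod x (introT (asboolP (lin_span G x)) Gx).

Lemma span_submod_valP (u : span_submod) : lin_span G (val u).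
Proof. exact/asboolP/(valP u). Qed.

Lemma Alinear_span_submod_val : Alinear (val : span_submod -> M).
Proof. by split=> [x y|a x]; rewrite ?raddfD ?linearZ. Qed.

End SpanSubmodule.

Lemma lin_span_full (A : pzRingType) (M : lmodType A) (G : M -> Prop)
    (Q : (M -> M) -> Prop) (fG : M -> span_submod G) :
  (forall g h, Alinear g -> Alinear h -> Q g -> Q h -> g =1 h) ->
  Alinear fG -> Q (val \o fG) -> Q id -> forall x, lin_span G x.
Proof.
move=> Q_uniq fG_lin Q_fG Q_id x.
have <- : val (fG x) = x.
  apply: (Q_uniq _ _ _ (@Alinear_id _ _) Q_fG Q_id).
  exact: Alinear_comp (Alinear_span_submod_val _) fG_lin.
exact: span_submod_valP.
Qed.

Lemma Kahler_generated (R : Type) (S : comPzRingType) (sc : R -> S)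
    (Om : lmodType S) (d : S -> Om) (G : Om -> Prop) :
  is_Kahler sc d -> (forall s, lin_span G (d s)) -> forall x, lin_span G x.
Proof.
move=> [[dD dsc dM] univ] Gd.
pose D s : span_submod G := span_submod_of (Gd s).
have Dder : R_derivation sc D.
  by split=> [s t|r s|s t]; apply: val_inj;
    rewrite /= ?raddfD ?linearZ /= ?dD ?dsc ?dM.
have [fG [fG_lin fGd _]] := univ _ D Dder.
have [f [_ _ f_uniq]] := univ _ d (And3 dD dsc dM).
apply: (@lin_span_full _ _ _ (fun g => forall s, g (d s) = d s) fG) => //.
- by move=> g h g_lin h_lin gd hd x; rewrite (f_uniq g) ?(f_uniq h).
- by move=> s /=; rewrite fGd.
Qed.

Lemma tensor_generated (A : pzRingType) (U V T : lmodType A)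
    (t : U -> V -> T) (G : T -> Prop) :
  is_tensor t -> (forall u v, lin_span G (t u v)) -> forall z, lin_span G z.
Proof.
move=> [[tl tr] univ] Gt.
pose b u v : span_submod G := span_submod_of (Gt u v).
have b_bilin : bilinear_map b.
  by split=> [v|u]; split=> [x y|a x]; apply: val_inj;
    rewrite /= ?raddfD ?linearZ /= ?(tl v).1 ?(tl v).2 ?(tr u).1 ?(tr u).2.
have [fG [fG_lin fGt _]] := univ _ b b_bilin.
have [f [_ _ f_uniq]] := univ _ t (conj tl tr).
apply: (@lin_span_full _ _ _ (fun g => forall u v, g (t u v) = t u v) fG) => //.
- by move=> g h g_lin h_lin gt ht x; rewrite (f_uniq g) ?(f_uniq h).
- by move=> u v /=; rewrite fGt.
Qed.

Lemma Kahler_lin_span (R : Type) (S : comPzRingType) (sc : R -> S)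
    (Om : lmodType S) (d : S -> Om) :
  is_Kahler sc d -> forall x, lin_span (fun m => exists s, m = d s) x.
Proof.
move=> HOm; apply: (Kahler_generated HOm).
by move=> s; rewrite -[d s]scale1r; apply: lin_span_gen; exists s.
Qed.

Lemma tensor_Kahler_lin_span (R : Type) (S : comPzRingType) (sc : R -> S)
    (Om T : lmodType S) (d : S -> Om) (t : Om -> Om -> T) :
  is_Kahler sc d -> is_tensor t ->
  forall z, lin_span (fun w => exists b e, w = t (d b) (d e)) z.
Proof.
move=> HOm Ht; have [[tl tr] _] := Ht.
apply: (tensor_generated Ht) => u v.
elim: (Kahler_lin_span HOm u) => [|u1 u2 _ IH1 _ IH2|a _ [b ->]].
- by rewrite (additive_fun0 (tl v).1); apply: lin_span0.
- by rewrite (tl v).1; apply: lin_spanD.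
rewrite (tl v).2; apply: lin_spanZ.
elim: (Kahler_lin_span HOm v) => [|v1 v2 _ IH1 _ IH2|a' _ [e ->]].
- by rewrite (additive_fun0 (tr (d b)).1); apply: lin_span0.
- by rewrite (tr (d b)).1; apply: lin_spanD.
- by rewrite (tr (d b)).2; apply: lin_span_gen; exists b, e.
Qed.

Section FlipDefect.
Variables (A : comNzRingType) (Om OO O2 : lmodType A) (d : A -> Om)
  (tens : Om -> Om -> OO) (wedge : Om -> Om -> O2) (omega : OO -> O2)
  (TA : comAlgType A) (j : Om -> TA) (Om1 : lmodType TA) (d1 : TA -> Om1)
  (TT : comAlgType TA) (j2 : Om1 -> TT) (c : TT -> TT) (Tp : TA -> TT)
  (TTA : comAlgType A) (in1 in2 : TA -> TTA) (U' : TTA -> TT)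
  (iota : OO -> TTA) (psi : O2 -> TT).
Hypotheses (omega_lin : Alinear omega)
  (omega_tens : forall x y, omega (tens x y) = wedge x y)
  (psiD : additive_fun psi)
  (psi_wedge : forall a b e : A, psi (a *: wedge (d b) (d e)) =
     (a%:A : TA)%:A * (j (d b))%:A * j2 (d1 (e%:A))
     - (a%:A : TA)%:A * j2 (d1 (b%:A)) * (j (d e))%:A)
  (iota_lin : Alinear iota)
  (iota_tens : forall x y, iota (tens x y) = in1 (j x) * in2 (j y))
  (in1_mor : alg_mor in1)
  (U_mor : ring_mor U') (U_in : forall w v, U' (in1 w * in2 v) = Tp w * v%:A)
  (Tp_mor : ring_mor Tp) (Tp_scalar : forall a : A, Tp (a%:A) = (a%:A : TA)%:A)
  (Tp_d : forall a : A, Tp (j (d a)) = j2 (d1 (a%:A)))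
  (c_mor : ring_mor c)
  (c_scalar : forall a : A, c ((a%:A : TA)%:A) = (a%:A : TA)%:A)
  (c_d : forall a : A, c ((j (d a))%:A) = j2 (d1 (a%:A)))
  (c_d' : forall a : A, c (j2 (d1 (a%:A))) = (j (d a))%:A).

Definition flip_defect (x : OO) : TT := c (U' (iota x)) - U' (iota x).

Lemma flip_defect_elementary a b e :
  flip_defect (a *: tens (d b) (d e)) = psi (omega (a *: tens (d b) (d e))).
Proof.
have [[_ in1M in11] in1Z] := in1_mor.
have [_ TpM _] := Tp_mor; have [_ cM _] := c_mor.
have scale_in1 : a *: (in1 (j (d b)) * in2 (j (d e))) =
                 in1 (a%:A * j (d b)) * in2 (j (d e)).
  by rewrite in1M -mulrA in1Z in11 mulr_algl.
rewrite /flip_defect iota_lin.2 iota_tens omega_lin.2 omega_tens psi_wedge.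
by rewrite scale_in1 U_in TpM Tp_scalar Tp_d !cM c_scalar c_d c_d'.
Qed.

Lemma flip_defect_span x :
  lin_span (fun w => exists b e, w = tens (d b) (d e)) x ->
  flip_defect x = psi (omega x).
Proof.
have [[cD _ _] [UD _ _]] := (c_mor, U_mor).
apply: (lin_span_ext (f := flip_defect) (g := psi \o omega))
  => [||a _ [b [e ->]]]; last exact: flip_defect_elementary.
- by apply: additive_funB; do 2?apply: additive_fun_comp => //; case: iota_lin.
- by apply: additive_fun_comp => //; case: omega_lin.
Qed.

End FlipDefect.

Theorem mainTheorem13
  (R : comPzRingType) (A : comAlgType R)
  (* Omega(A), d *)
  (Om : lmodType A) (d : A -> Om)
  (HOm : is_Kahler (fun r : R => r%:A : A) d)
  (* Omega(A) (x)_A Omega(A) *)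
  (OO : lmodType A) (tens : Om -> Om -> OO) (HOO : is_tensor tens)
  (* Omega^2(A) = Omega(A) /\_A Omega(A) *)
  (O2 : lmodType A) (wedge : Om -> Om -> O2) (HO2 : is_wedge wedge)
  (* omega(alpha (x) beta) = alpha /\ beta *)
  (omega : OO -> O2)
  (Homega : Alinear omega /\ forall x y, omega (tens x y) = wedge x y)
  (* T(A) = Sym_A(Omega(A)) *)
  (TA : comAlgType A) (j : Om -> TA) (HTA : is_symalg j)
  (* Omega(T(A)) over R, with universal derivation d' *)
  (Om1 : lmodType TA) (d1 : TA -> Om1)
  (HOm1 : is_Kahler (fun r : R => (r%:A : A)%:A : TA) d1)
  (* T^2(A) = Sym_{T(A)}(Omega(T(A))) *)
  (TT : comAlgType TA) (j2 : Om1 -> TT) (HTT : is_symalg j2)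
  (* the flip c_A *)
  (c : TT -> TT)
  (Hc : [/\ ring_mor c,
          forall a : A, c ((a%:A : TA)%:A) = (a%:A : TA)%:A,
          forall a : A, c ((j (d a))%:A) = j2 (d1 (a%:A)),
          forall a : A, c (j2 (d1 (a%:A))) = (j (d a))%:A
        & forall a : A, c (j2 (d1 (j (d a)))) = j2 (d1 (j (d a)))])
  (* T(p_A) : T(A) -> T^2(A) *)
  (Tp : TA -> TT)
  (HTp : [/\ ring_mor Tp, forall a : A, Tp (a%:A) = (a%:A : TA)%:A
          & forall a : A, Tp (j (d a)) = j2 (d1 (a%:A))])
  (* T(A) (x)_A T(A) *)
  (TTA : comAlgType A) (in1 in2 : TA -> TTA) (HTTA : is_alg_tensor in1 in2)
  (* U' : T(A) (x)_A T(A) -> T^2(A),  w (x) v |-> T(p_A)(w) v *)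
  (U' : TTA -> TT)
  (HU : ring_mor U' /\ forall w v : TA, U' (in1 w * in2 v) = Tp w * v%:A)
  (* the inclusion Omega(A) (x)_A Omega(A) -> T(A) (x)_A T(A) *)
  (iota : OO -> TTA)
  (Hiota : Alinear iota /\
           forall x y, iota (tens x y) = in1 (j x) * in2 (j y))
  (* the module connection *)
  (nab : Om -> OO)
  (Hnab : module_connection (fun r : R => r%:A : A) d tens nab)
  (* vertical part K_nabla *)
  (K : TA -> TT)
  (HK : [/\ ring_mor K, forall a : A, K (a%:A) = (a%:A : TA)%:A
         & forall a : A, K (j (d a)) = j2 (d1 (j (d a))) - U' (iota (nab (d a)))])
  (* horizontal part H_nabla *)
  (H : TT -> TTA)
  (HH : forall a : A, H (j2 (d1 (j (d a)))) = iota (nab (d a)))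
  (* psi-hat : Omega^2(A) -> T^2(A) *)
  (psi : O2 -> TT)
  (Hpsi : additive_fun psi /\
          forall a b c0 : A, psi (a *: wedge (d b) (d c0)) =
            (a%:A : TA)%:A * (j (d b))%:A * j2 (d1 (c0%:A))
            - (a%:A : TA)%:A * j2 (d1 (b%:A)) * (j (d c0))%:A)
  (* the torsion V *)
  (V : TA -> TT)
  (HV : [/\ ring_mor V, forall a : A, V (a%:A) = (a%:A : TA)%:A
         & forall a : A, V (j (d a)) =
             c (U' (H (j2 (d1 (j (d a))))))
             - U' (H (c (j2 (d1 (j (d a))))))]) :
  [/\ forall a : A, V (a%:A) = (a%:A : TA)%:A,
      forall a : A, V (j (d a)) = psi (omega (nab (d a)))
    & (forall a : A, omega (nab (d a)) = 0) -> forall a : A, V (j (d a)) = 0].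
Proof.
have [_ V_scalar V_d] := HV.
have [c_mor c_scalar c_d c_d' c_dd] := Hc.
have [Tp_mor Tp_scalar Tp_d] := HTp.
have [in1_mor _ _] := HTTA.
have [[omega_lin omega_tens] [psiD psi_wedge]] := (Homega, Hpsi).
have torsion_d a : V (j (d a)) = psi (omega (nab (d a))).
  rewrite V_d HH c_dd HH.
  exact: (flip_defect_span (j2 := j2) (d1 := d1) omega_lin omega_tens
    psiD psi_wedge Hiota.1 Hiota.2 in1_mor HU.1 HU.2 Tp_mor Tp_scalar Tp_d
    c_mor c_scalar c_d c_d' (tensor_Kahler_lin_span HOm HOO _)).
split=> // nab_d_wedge0 a.
by rewrite torsion_d nab_d_wedge0 (additive_fun0 psiD).
Qed.
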